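(* Let $(\Omega,T)$ be a minimal subshift over a finite alphabet such that no word in $L_5(\Omega)$ has repeated letters. Then for every $w,v\in L(\Omega)$, every $i,j\in\mathbb Z$ and every cylinder partition $C$ of $(w,i)$, the following hold in $G_T'$: $$\left(\sigma_{(w,i)}\right)^3=1,\qquad \left(\sigma_{(w,i)}\,\sigma_{(w,i+1)}\right)^2=1,\qquad \sigma_{(w,i+1)}=\sigma_{(w,i)}\ast\sigma_{(w,i+2)},\qquad \sigma_{(w,i)}=\prod_{(s,k)\in C}\sigma_{(s,k)},$$ and $[\sigma_{(w,i)},\sigma_{(v,j)}]=1$ whenever $(w,i)$ and $(v,j)$ are $3$-disjoint.
   Context: $T$ is the left shift $(T\omega)_m=\omega_{m+1}$ on $A^{\mathbb Z}$, $A$ finite; a minimal subshift is a closed shift-invariant $\Omega\subseteq A^{\mathbb Z}$ with every orbit dense. Words are indexed from $0$; $L_m(\Omega)$ is the set of words of length $m$ occurring in sequences of $\Omega$, $L(\Omega)=\bigcup_mL_m(\Omega)$. For a word $v$ and $i\in\mathbb Z$, $(v,i)=\{\omega\in\Omega:\omega_{k-i}=v_k,\ 0\leq k\leq|v|-1\}$. A cylinder partition of $(w,i)$ is a finite family of cylinder sets $(s,k)$ that are pairwise disjoint with union $(w,i)$. For a clopen $U$ with $U,TU,T^2U$ pairwise disjoint, $\sigma_U(\omega)=T\omega$ on $U\cup TU$, $\sigma_U(\omega)=T^{-2}\omega$ on $T^2U$, $\sigma_U(\omega)=\omega$ elsewhere; $\sigma_{(w,i)}:=\sigma_U$ with $U=(w,i)$.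 $G_T$ is the group of homeomorphisms $S$ of $\Omega$ with $S(x)=T^{f_S(x)}x$ for a continuous $f_S:\Omega\to\mathbb Z$, and $G_T'$ its commutator subgroup (which contains all $\sigma_U$). For group elements $r,s$, $r\ast s:=s\,r^{-1}s^{-1}r$. Clopen sets $U,V$ are $3$-disjoint if $(U\cup TU\cup T^2U)\cap(V\cup TV\cup T^2V)=\emptyset$. *)

From Stdlib Require Import ZArith ClassicalEpsilon.
From Stdlib Require List.
From mathcomp Require Import all_boot.
Set Implicit Arguments. Unset Strict Implicit. Unset Printing Implicit Defensive.

Open Scope Z_scope.

Section Subshift.
Variable A : finType.

Definition config := Z -> A.
Definition cset := config -> Prop.

Definition shiftn (n : Z) (w : config) : config := fun m => w (m + n).
Definition T (w : config) : config := shiftn 1 w.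

Definition imgT (U : cset) : cset := fun x => exists y, U y /\ x = T y.

Definition agree_on (n : Z) (w w' : config) : Prop :=
  forall m, - n <= m <= n -> w m = w' m.

(* closed in the product topology (= contains all limit points) *)
Definition closed_set (Om : cset) : Prop :=
  forall w, (forall n, exists w', Om w' /\ agree_on n w' w) -> Om w.

Definition shift_invariant (Om : cset) : Prop :=
  forall w, Om w <-> Om (T w).

(* every orbit {T^k w | k in Z} is dense in Om (basic opens = cylinders) *)
Definition orbits_dense (Om : cset) : Prop :=
  forall w w', Om w -> Om w' -> forall n, exists k, agree_on n (shiftn k w) w'.

Definition minimal_subshift (Om : cset) : Prop :=
  [/\ closed_set Om, shift_invariant Om & orbits_dense Om].

Definition occurs_at (v : seq A) (w : config) (m : Z) : Prop :=
  v = [seq w (m + Z.of_nat k) | k <- iota 0 (size v)].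

Definition lang (Om : cset) (v : seq A) : Prop :=
  exists w m, Om w /\ occurs_at v w m.
Definition lang_n (Om : cset) (n : nat) (v : seq A) : Prop :=
  lang Om v /\ size v = n.

(* cylinder (v,i) = { w in Om : w_(k-i) = v_k, 0 <= k <= |v|-1 } *)
Definition cyl (Om : cset) (v : seq A) (i : Z) : cset :=
  fun w => Om w /\ occurs_at v w (- i).

Definition sigma (U : cset) (w : config) : config :=
  if excluded_middle_informative (U w \/ imgT U w) then T w
  else if excluded_middle_informative (imgT (imgT U) w) then shiftn (-2) w
  else w.

Definition sigma_cyl (Om : cset) (v : seq A) (i : Z) : config -> config :=
  sigma (cyl Om v i).

Definition three_disjoint (U V : cset) : Prop :=
  forall w, (U w \/ imgT U w \/ imgT (imgT U) w) ->
            ~ (V w \/ imgT V w \/ imgT (imgT V) w).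

Definition cyl_partition (Om : cset) (C : seq (seq A * Z)) (v : seq A) (i : Z)
  : Prop :=
  (forall p q, (p < q < size C)%nat ->
     forall d x, ~ (cyl Om (nth d C p).1 (nth d C p).2 x /\
                    cyl Om (nth d C q).1 (nth d C q).2 x)) /\
  (forall x, cyl Om v i x <-> exists c, List.In c C /\ cyl Om c.1 c.2 x).

(* product (composition, leftmost factor applied last) of the sigma_(s,k) *)
Definition sigma_prod (Om : cset) (C : seq (seq A * Z)) : config -> config :=
  foldr (fun c f => fun x => sigma_cyl Om c.1 c.2 (f x)) id C.

Definition inverse_on (Om : cset) (f g : config -> config) : Prop :=
  forall x, Om x -> [/\ Om (g x), f (g x) = x & g (f x) = x].

End Subshift.

From Stdlib Require Import ZArith ClassicalEpsilon.
From Stdlib Require List.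
From mathcomp Require Import all_boot.
From Stdlib Require Import Lia FunctionalExtensionality Classical.
Set Implicit Arguments. Unset Strict Implicit. Unset Printing Implicit Defensive.
Open Scope Z_scope.

(* sigma_(w,k) moves only the points of (w,k) u (w,k+1) u (w,k+2), translating them by
   T, T and T^-2 respectively.  Since no 5-letter word of the language repeats a letter,
   two occurrences of a nonempty w in the same point are at least 5 apart, so on every
   orbit the maps in each identity see at most one occurrence of w, and the identity
   reduces to following that occurrence through a few translations.  For a partition
   of (w,i), the translates (s,k), T(s,k), T^2(s,k) of distinct pieces are disjoint, as
   they sit inside the disjoint sets (w,i), T(w,i), T^2(w,i); so the sigma's of the
   pieces commute and each acts on its own support exactly as sigma_(w,i) does. *)

Lemma ForallOrdPairs_impl_in (T : Type) (R R' : T -> T -> Prop) (s : seq T) :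
  (forall a b, List.In a s -> List.In b s -> R a b -> R' a b) ->
  List.ForallOrdPairs R s -> List.ForallOrdPairs R' s.
Proof.
move=> RR' FR; elim: FR RR' => [|a s' Ra _ IH] RR'; constructor.
- apply/List.Forall_forall => b s'b; apply: RR'; [left | right | ] => //.
  exact: (proj1 (List.Forall_forall _ _) Ra).
- by apply: IH => b c s'b s'c; apply: RR'; right.
Qed.

Lemma Forall_nth (T : Type) (Q : T -> Prop) (d : T) (s : seq T) :
  (forall p, (p < size s)%N -> Q (nth d s p)) -> List.Forall Q s.
Proof.
elim: s => [|a s IH] Qs; constructor; first exact: (Qs 0%N).
by apply: IH => p; apply: (Qs p.+1).
Qed.

Lemma ForallOrdPairs_nth (T : Type) (R : T -> T -> Prop) (d : T) (s : seq T) :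
  (forall p q, (p < q < size s)%N -> R (nth d s p) (nth d s q)) ->
  List.ForallOrdPairs R s.
Proof.
elim: s => [|a s IH] Rs; constructor.
- by apply: (Forall_nth (d := d)) => q lt_q; apply: (Rs 0%N q.+1).
- by apply: IH => p q lt_pq; apply: (Rs p.+1 q.+1).
Qed.

Section Sigma.
Variable A : finType.
Implicit Types (U V W : cset A) (x y : config A).

Lemma shiftnD a b x : shiftn a (shiftn b x) = shiftn (a + b) x.
Proof. by apply: functional_extensionality => m; rewrite /shiftn Z.add_assoc. Qed.

Lemma shiftn0 x : shiftn 0 x = x.
Proof. by apply: functional_extensionality => m; rewrite /shiftn Z.add_0_r. Qed.

Lemma imgTE U x : imgT U x <-> U (shiftn (-1) x).
Proof.
split; first by case=> y [Uy ->]; rewrite /T shiftnD shiftn0.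
by exists (shiftn (-1) x); rewrite /T shiftnD shiftn0.
Qed.

Lemma imgT2E U x : imgT (imgT U) x <-> U (shiftn (-2) x).
Proof. by rewrite imgTE imgTE shiftnD. Qed.

Definition supp U x := U x \/ imgT U x \/ imgT (imgT U) x.

Lemma suppE U x : supp U x <-> exists2 a, 0 <= a <= 2 & U (shiftn (- a) x).
Proof.
rewrite /supp imgTE imgT2E; split.
- case=> [Ux|[Ux|Ux]]; [exists 0 | exists 1 | exists 2] => //.
  by rewrite shiftn0.
- case=> a Ha Ua.
  have [E|[E|E]] : a = 0 \/ a = 1 \/ a = 2 by lia.
  all: by rewrite E ?shiftn0 in Ua; tauto.
Qed.

Lemma sigma_fwd U x : U x \/ U (shiftn (-1) x) -> sigma U x = shiftn 1 x.
Proof.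
move=> Ux; have E1 := imgTE U x; rewrite /sigma.
by destruct excluded_middle_informative => //; exfalso; tauto.
Qed.

Lemma sigma_back U x :
  U (shiftn (-2) x) -> ~ U x -> ~ U (shiftn (-1) x) -> sigma U x = shiftn (-2) x.
Proof.
move=> U2 U0 U1; have E1 := imgTE U x; have E2 := imgT2E U x; rewrite /sigma.
destruct excluded_middle_informative; first by exfalso; tauto.
by destruct excluded_middle_informative => //; exfalso; tauto.
Qed.

Lemma sigma_out U x : ~ supp U x -> sigma U x = x.
Proof.
rewrite /supp => Ux; rewrite /sigma.
destruct excluded_middle_informative; first by exfalso; tauto.
by destruct excluded_middle_informative => //; exfalso; tauto.
Qed.

Lemma supp_sigma U x : supp U x -> supp U (sigma U x).
Proof.
move=> Ux; rewrite /sigma.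
destruct excluded_middle_informative as [U01|nU01].
  by case: U01 => U01; right; [left | right]; exists x.
destruct excluded_middle_informative as [U2|nU2] => //=.
case: U2 => _ [[y [Uy ->]] ->].
by left; rewrite /T !shiftnD /= shiftn0.
Qed.

Lemma sigma_comm U V x : three_disjoint U V -> sigma U (sigma V x) = sigma V (sigma U x).
Proof.
move=> UV.
have [Ux|Ux] := classic (supp U x).
  by rewrite (sigma_out (UV _ Ux)) (sigma_out (UV _ (supp_sigma Ux))).
have [Vx|Vx] := classic (supp V x); last by rewrite !sigma_out.
have nU : ~ supp U (sigma V x) by move=> /UV; apply; apply: supp_sigma.
by rewrite (sigma_out nU) (sigma_out Ux).
Qed.

(* The paper's standing assumption on U: U, TU and T^2 U are pairwise disjoint. *)
Definition translates_disjoint U := forall x d, 0 < d <= 2 -> U x -> ~ U (shiftn d x).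

Lemma translates_disjoint_neq W x a b :
  translates_disjoint W -> 0 <= a <= 2 -> 0 <= b <= 2 -> a <> b ->
  W (shiftn (- a) x) -> ~ W (shiftn (- b) x).
Proof.
move=> disjW Ha Hb neq_ab Wa Wb.
have [lt_ab|lt_ba] : a < b \/ b < a by lia.
- apply: (disjW _ (b - a) _ Wb); first lia.
  by rewrite shiftnD (_ : b - a + - b = - a) //; lia.
- apply: (disjW _ (a - b) _ Wa); first lia.
  by rewrite shiftnD (_ : a - b + - a = - b) //; lia.
Qed.

Lemma sigma_sub U W x :
  translates_disjoint W -> (forall y, U y -> W y) -> supp U x -> sigma U x = sigma W x.
Proof.
move=> disjW UW /suppE[a Ha Ua].
have [a0|[a1|a2]] : a = 0 \/ a = 1 \/ a = 2 by lia.
- by rewrite a0 shiftn0 in Ua; rewrite !sigma_fwd; auto.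
- by rewrite a1 in Ua; rewrite !sigma_fwd; auto.
rewrite a2 in Ua; have W2 := UW _ Ua.
have nW0 : ~ W x.
  have := translates_disjoint_neq (x := x) (a := 2) (b := 0) disjW.
  by rewrite /= shiftn0; apply=> //; lia.
have nW1 : ~ W (shiftn (-1) x).
  by apply: (translates_disjoint_neq (a := 2) (b := 1) disjW) => //; lia.
by rewrite !sigma_back //; auto.
Qed.

Lemma three_disjoint_sub U V W :
  translates_disjoint W -> (forall y, U y -> W y) -> (forall y, V y -> W y) ->
  (forall y, ~ (U y /\ V y)) -> three_disjoint U V.
Proof.
move=> disjW UW VW UV x /suppE[a Ha Ua] /suppE[b Hb Vb].
have [eq_ab|neq_ab] := Z.eq_dec a b.
  by apply: (UV (shiftn (- a) x)); rewrite {2}eq_ab.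
exact: (translates_disjoint_neq disjW Ha Hb neq_ab (UW _ Ua) (VW _ Vb)).
Qed.

Section Composition.
Variables (I : Type) (P : I -> cset A).

Definition sigma_seq (C : seq I) : config A -> config A :=
  foldr (fun c f x => sigma (P c) (f x)) id C.

Lemma sigma_seq_out C x :
  (forall c, List.In c C -> ~ supp (P c) x) -> sigma_seq C x = x.
Proof.
elim: C => [//|c C IH] outC /=.
rewrite IH ?sigma_out //; first by apply: outC; left.
by move=> d Cd; apply: outC; right.
Qed.

Lemma sigma_seq_in C c x :
  List.ForallOrdPairs (fun c d => three_disjoint (P c) (P d)) C ->
  List.In c C -> supp (P c) x -> sigma_seq C x = sigma (P c) x.
Proof.
elim=> [//|c' C' disj_c' _ IH] /= [<-|Cc] Px.
  rewrite sigma_seq_out // => d Cd.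
  exact: (proj1 (List.Forall_forall _ _) disj_c' d Cd x Px).
rewrite IH // sigma_out // => Pc'.
exact: (proj1 (List.Forall_forall _ _) disj_c' c Cc _ Pc' (supp_sigma Px)).
Qed.

End Composition.

Lemma sigma_partition (I : Type) (P : I -> cset A) W C :
  translates_disjoint W ->
  List.ForallOrdPairs (fun c d => forall y, ~ (P c y /\ P d y)) C ->
  (forall y, W y <-> exists c, List.In c C /\ P c y) ->
  forall x, sigma W x = sigma_seq P C x.
Proof.
move=> disjW disjC coverW x.
have PW c : List.In c C -> forall y, P c y -> W y by move=> Cc y Pc; apply/coverW; exists c.
have [[c [Cc Pc]]|nPC] := classic (exists c, List.In c C /\ supp (P c) x).
  rewrite (sigma_seq_in _ Cc Pc); first exact/esym/(sigma_sub disjW (PW c Cc)).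
  apply: ForallOrdPairs_impl_in disjC => a b Ca Cb.
  exact: three_disjoint_sub disjW (PW a Ca) (PW b Cb).
rewrite sigma_seq_out ?sigma_out => [//| |c Cc Pc]; last by apply: nPC; exists c.
move=> /suppE[a Ha /coverW[c [Cc Pc]]]; apply: nPC; exists c; split=> //.
by apply/suppE; exists a.
Qed.

End Sigma.

Section TranslationFamily.
Variables (A : finType) (W : Z -> cset A).
Hypothesis W_shiftn : forall k n x, W k (shiftn n x) <-> W (k - n) x.
Hypothesis W_sep : forall k l x, W k x -> W l x -> -4 <= k - l <= 4 -> k = l.
Implicit Types (x y : config A).

Lemma W_translates_disjoint k : translates_disjoint (W k).
Proof. by move=> x d Hd Wx /W_shiftn /(W_sep Wx) ?; lia. Qed.

Lemma sigmaW_fwd k y : W k y \/ W (k + 1) y -> sigma (W k) y = shiftn 1 y.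
Proof. by move=> Wy; apply: sigma_fwd; rewrite W_shiftn (_ : k - -1 = k + 1) //; lia. Qed.

Lemma sigmaW_back k y : W (k + 2) y -> sigma (W k) y = shiftn (-2) y.
Proof.
move=> Wy; apply: sigma_back; rewrite ?W_shiftn.
- by rewrite (_ : k - -2 = k + 2) //; lia.
- by move/(W_sep Wy); lia.
- by move/(W_sep Wy); lia.
Qed.

Lemma sigmaW_free k y :
  ~ W k y -> ~ W (k + 1) y -> ~ W (k + 2) y -> sigma (W k) y = y.
Proof.
move=> W0 W1 W2; apply: sigma_out; rewrite suppE => -[a Ha].
rewrite W_shiftn Z.sub_opp_r.
have [->|[->|->]] : a = 0 \/ a = 1 \/ a = 2 by lia.
all: by rewrite ?Z.add_0_r.
Qed.

Lemma W_shiftn_occ n x q m : W n x -> m - q = n -> W m (shiftn q x).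
Proof. by move=> Wx mqn; apply/W_shiftn; rewrite mqn. Qed.

Lemma W_shiftn_nocc n x q m :
  W n x -> m - q <> n -> -4 <= m - q - n <= 4 -> ~ W m (shiftn q x).
Proof. by move=> Wx mqn dist /W_shiftn /W_sep /(_ Wx dist). Qed.

(* [W n x] is an occurrence and [shiftn q x] the current point of its orbit;
   [n + q - k] locates the occurrence relative to the window of [sigma (W k)]. *)

Lemma sigmaW_orbit_fwd n x q k :
  W n x -> n + q - k = 0 \/ n + q - k = 1 -> sigma (W k) (shiftn q x) = shiftn (q + 1) x.
Proof.
move=> Wx d; rewrite sigmaW_fwd; first by rewrite shiftnD; f_equal; lia.
by case: d => d; [left | right]; apply: (W_shiftn_occ Wx); lia.
Qed.

Lemma sigmaW_orbit_back n x q k :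
  W n x -> n + q - k = 2 -> sigma (W k) (shiftn q x) = shiftn (q - 2) x.
Proof.
move=> Wx d; rewrite sigmaW_back; first by rewrite shiftnD; f_equal; lia.
by apply: (W_shiftn_occ Wx); lia.
Qed.

Lemma sigmaW_orbit_fix n x q k :
  W n x -> n + q - k = -2 \/ n + q - k = -1 \/ n + q - k = 3 \/ n + q - k = 4 ->
  sigma (W k) (shiftn q x) = shiftn q x.
Proof. by move=> Wx d; rewrite sigmaW_free //; apply: (W_shiftn_nocc Wx); lia. Qed.

Lemma sigmaW_no_occurrence lo hi k x :
  (forall n, lo <= n <= hi -> ~ W n x) -> lo <= k -> k + 2 <= hi -> sigma (W k) x = x.
Proof. by move=> none *; rewrite sigmaW_free //; apply: none; lia. Qed.

Lemma occurrence_cases lo hi x :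
  (exists2 n, lo <= n <= hi & W n x) \/ (forall n, lo <= n <= hi -> ~ W n x).
Proof.
have [[n [Hn Wn]]|none] := classic (exists n, lo <= n <= hi /\ W n x).
  by left; exists n.
by right=> n Hn Wn; apply: none; exists n.
Qed.

Ltac follow_orbit Wx :=
  repeat first
    [ rewrite (sigmaW_orbit_fwd Wx); last by lia
    | rewrite (sigmaW_orbit_back Wx); last by lia
    | rewrite (sigmaW_orbit_fix Wx); last by lia ];
  f_equal; lia.

Ltac stay_fixed none :=
  repeat (rewrite (sigmaW_no_occurrence none); [| lia | lia]); reflexivity.

Lemma sigmaW_cube k x : sigma (W k) (sigma (W k) (sigma (W k) x)) = x.
Proof.
have [[n Hn Wx]|none] := occurrence_cases k (k + 2) x; last by stay_fixed none.
rewrite -(shiftn0 x).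
have [n0|[n1|n2]] : n = k \/ n = k + 1 \/ n = k + 2 by lia.
all: follow_orbit Wx.
Qed.

Lemma sigmaW_braid k x :
  sigma (W k) (sigma (W (k + 1)) (sigma (W k) (sigma (W (k + 1)) x))) = x.
Proof.
have [[n Hn Wx]|none] := occurrence_cases k (k + 3) x; last by stay_fixed none.
rewrite -(shiftn0 x).
have [n0|[n1|[n2|n3]]] : n = k \/ n = k + 1 \/ n = k + 2 \/ n = k + 3 by lia.
all: follow_orbit Wx.
Qed.

(* The right-hand side is s r^-1 s^-1 r with r = sigma (W k), s = sigma (W (k + 2)),
   using r^-1 = r^2 and s^-1 = s^2. *)
Lemma sigmaW_conj k x :
  sigma (W (k + 1)) x =
  sigma (W (k + 2)) (sigma (W k) (sigma (W k)
    (sigma (W (k + 2)) (sigma (W (k + 2)) (sigma (W k) x))))).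
Proof.
have [[n Hn Wx]|none] := occurrence_cases k (k + 4) x; last by stay_fixed none.
rewrite -(shiftn0 x).
have [n0|[n1|[n2|[n3|n4]]]] :
  n = k \/ n = k + 1 \/ n = k + 2 \/ n = k + 3 \/ n = k + 4 by lia.
all: follow_orbit Wx.
Qed.

End TranslationFamily.

Lemma occurs_at_shiftn (A : finType) (v : seq A) x n m :
  occurs_at v (shiftn n x) m <-> occurs_at v x (m + n).
Proof.
rewrite /occurs_at; split=> E; rewrite [LHS]E; apply: eq_map => k.
all: by rewrite /shiftn; f_equal; lia.
Qed.

Lemma inverse_on_cube (A : finType) (Om : cset A) (f g : config A -> config A) :
  inverse_on Om f g -> (forall x, Om x -> Om (f x)) ->
  (forall x, Om x -> f (f (f x)) = x) -> forall x, Om x -> g x = f (f x).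
Proof.
move=> fg Omf f3 x Omx; rewrite -{1}(f3 x Omx).
by have [_ _ ->] := fg _ (Omf _ (Omf _ Omx)).
Qed.

Section Cylinders.
Variables (A : finType) (Om : cset A).
Hypothesis Om_inv : shift_invariant Om.
Implicit Types (x : config A) (w : seq A).

Lemma Om_shiftn n x : Om (shiftn n x) <-> Om x.
Proof.
elim/Z.peano_ind: n x => [|n IHn|n IHn] x; first by rewrite shiftn0.
- by rewrite -Z.add_1_l -shiftnD -/(T _) -Om_inv.
- by rewrite Om_inv /T shiftnD Z.add_1_l Z.succ_pred.
Qed.

Lemma cyl_shiftn w k n x : cyl Om w k (shiftn n x) <-> cyl Om w (k - n) x.
Proof. by rewrite /cyl Om_shiftn occurs_at_shiftn (Z.opp_sub_distr k n). Qed.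

Lemma sigma_preserves U x : Om x -> Om (sigma U x).
Proof.
rewrite /sigma => Omx.
destruct excluded_middle_informative; first exact: (Om_inv x).1.
by destruct excluded_middle_informative => //; apply/Om_shiftn.
Qed.
Lemma cyl_head a0 w k x : cyl Om (a0 :: w) k x -> x (- k) = a0.
Proof. by case=> _ [-> _]; rewrite Z.add_0_r. Qed.

Hypothesis Om_uniq5 : forall u : seq A, lang_n Om 5 u -> uniq u.

Lemma cyl_sep w :
  w <> [::] -> forall a b x, cyl Om w a x -> cyl Om w b x -> -4 <= a - b <= 4 -> a = b.
Proof.
case: w => [//|a0 w] _ a b x Wa Wb dist.
(* the letter a0 sits at -a and at -b inside the 5-letter word of x starting at m *)
pose m := Z.min (- a) (- b).
pose u := [seq x (m + Z.of_nat k) | k <- iota 0 5].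
have u_uniq : uniq u.
  apply: Om_uniq5; split; last by rewrite size_map size_iota.
  by exists x, m; split; [case: Wa | rewrite /occurs_at size_map size_iota].
have nth_u p : (p < 5)%N -> nth (x 0) u p = x (m + Z.of_nat p).
  by move=> lt_p5; rewrite (nth_map 0%N) ?size_iota // nth_iota.
have letter c : c = a \/ c = b ->
    (Z.to_nat (- c - m) < size u)%N /\ nth (x 0) u (Z.to_nat (- c - m)) = x (- c).
  move=> ab_c; have lt_c5 : (Z.to_nat (- c - m) < 5)%N by apply/ltP; lia.
  by rewrite nth_u // size_map size_iota; split=> //; f_equal; lia.
have [lt_a ua] := letter a (or_introl erefl).
have [lt_b ub] := letter b (or_intror erefl).
have := nth_uniq (x 0) lt_a lt_b u_uniq.
by rewrite ua ub (cyl_head Wa) (cyl_head Wb) eqxx => /esym/eqP; lia.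
Qed.

Lemma sigma_cyl_partition w i C :
  w <> [::] -> cyl_partition Om C w i -> forall x, sigma_cyl Om w i x = sigma_prod Om C x.
Proof.
move=> w_nil [disjC coverW] x.
apply: (sigma_partition (P := fun c => cyl Om c.1 c.2)) => //.
  exact: W_translates_disjoint (cyl_shiftn w) (cyl_sep w_nil) i.
by apply: (ForallOrdPairs_nth (d := ([::], 0))) => p q lt_pq y; apply: disjC.
Qed.

End Cylinders.

Theorem corollary3p6 (A : finType) (Om : cset A) :
  minimal_subshift Om ->
  (forall u : seq A, lang_n Om 5 u -> uniq u) ->
  forall (w v : seq A) (i j : Z),
    lang Om w -> w <> [::] -> lang Om v -> v <> [::] ->
    (* sigma_(w,i)^3 = 1 *)
    (forall x, Om x ->
       sigma_cyl Om w i (sigma_cyl Om w i (sigma_cyl Om w i x)) = x) /\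
    (* (sigma_(w,i) sigma_(w,i+1))^2 = 1 *)
    (forall x, Om x ->
       sigma_cyl Om w i (sigma_cyl Om w (i + 1)
         (sigma_cyl Om w i (sigma_cyl Om w (i + 1) x))) = x) /\
    (* sigma_(w,i+1) = sigma_(w,i) * sigma_(w,i+2) = s r^-1 s^-1 r *)
    (forall rinv sinv : config A -> config A,
       inverse_on Om (sigma_cyl Om w i) rinv ->
       inverse_on Om (sigma_cyl Om w (i + 2)) sinv ->
       forall x, Om x ->
         sigma_cyl Om w (i + 1) x =
         sigma_cyl Om w (i + 2) (rinv (sinv (sigma_cyl Om w i x)))) /\
    (* sigma_(w,i) = prod_{(s,k) in C} sigma_(s,k) *)
    (forall C : seq (seq A * Z), cyl_partition Om C w i ->
       forall x, Om x -> sigma_cyl Om w i x = sigma_prod Om C x) /\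
    (* [sigma_(w,i), sigma_(v,j)] = 1 when 3-disjoint *)
    (three_disjoint (cyl Om w i) (cyl Om v j) ->
       forall x, Om x ->
         sigma_cyl Om w i (sigma_cyl Om v j x) =
         sigma_cyl Om v j (sigma_cyl Om w i x)).
Proof.
move=> [_ Om_inv _] Om_uniq5 w v i j _ w_nil _ _.
have shift := cyl_shiftn Om_inv w.
have sep := cyl_sep Om_uniq5 w_nil.
have preserve k := sigma_preserves Om_inv (cyl Om w k).
have cube k x (_ : Om x) := sigmaW_cube shift sep k x.
split; first exact: cube.
split; first by move=> x _; exact: sigmaW_braid shift sep i x.
split.
  move=> rinv sinv r_inv s_inv x Omx.
  rewrite (inverse_on_cube s_inv (preserve _) (cube _)); last by apply: preserve.
  rewrite (inverse_on_cube r_inv (preserve _) (cube _)); last by apply/preserve/preserve/preserve.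
  exact: sigmaW_conj shift sep i x.
split; first by move=> C part_C x _; exact: sigma_cyl_partition.
by move=> disj x _; exact: sigma_comm.
Qed.
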